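(* Let $d,\ell,r,s\in\mathbb{N}$ with $d\ge\ell$, let $T\subseteq\mathbb{F}$ be a subset of size $n$, and let $r=s-\lfloor\frac{d-\ell}{n}\rfloor$. Let $Q,R\in\mathbb{F}[x]$ be univariate polynomials of degree at most $\ell$, and let $g\colon T\to\mathbb{F}_{<r}[z]$ and $w\colon T\times[r]\to\mathbb{Z}_{\ge0}$ be functions such that $w(a,i)\le\frac n2\big((s-i)-\frac{d-\ell}{n}\big)$ for every $(a,i)\in T\times[r]$. If $Q\ne R$, then \[\Gamma^{s,d,\ell}_w(g,Q)+\Gamma^{s,d,\ell}_w(g,R)\ge n^2\Big(s-\frac dn\Big).\]
   Context: $\mathbb{F}$ is a field, $[r]=\{0,1,\dots,r-1\}$, and $\mathbb{F}_{<r}[z]$ denotes polynomials of degree $<r$. For a polynomial $R$ of degree at most $\ell$, for $i\in[r+1]$ let $A_i(g,R)=\{a\in T:\max\{j\in[r+1]: g(a)\equiv R(a+z)\bmod\langle z\rangle^j\}=i\}$. Define \[\Gamma^{s,d,\ell}_w(g,R)=\sum_{i=0}^{r-1}\sum_{a\in A_i(g,R)}\max\Big\{n\Big((s-i)-\tfrac{d-\ell}{n}\Big)-w(a,i),\ \max_{j<i}w(a,j)\Big\}+\sum_{a\in A_r(g,R)}\max_{j<r}w(a,j),\] where a maximum over an empty index set is ignored (taken as $0$). *)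

From HB Require Import structures.
From mathcomp Require Import all_boot all_order all_algebra.
Set Implicit Arguments. Unset Strict Implicit. Unset Printing Implicit Defensive.
Import Order.TTheory GRing.Theory Num.Theory.
Local Open Scope ring_scope.

Definition shiftp (F : fieldType) (R : {poly F}) (a : F) : {poly F} :=
  R \Po ('X + a%:P).

Definition agree (F : fieldType) (r : nat) (g : F -> {poly F}) (R : {poly F})
  (a : F) : nat :=
  \max_(j < r.+1 | ('X^j %| (g a - shiftp R a))%R) (j : nat).

(* Gamma^{s,d,l}_w(g,R), with T given as a duplicate-free sequence,
   n = size T, and [r] = {0,...,r-1}.  Empty maxima are taken as 0. *)
Definition Gamma (F : fieldType) (s d l r : nat) (T : seq F)
  (w : F -> nat -> nat) (g : F -> {poly F}) (R : {poly F}) : rat :=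
  let n := (size T)%:R : rat in
  \sum_(i < r) \sum_(a <- T | agree r g R a == i)
     Num.max (n * ((s%:R - (i : nat)%:R) - (d%:R - l%:R) / n) - (w a i)%:R)
             ((\max_(j < i) w a j)%N)%:R
  + \sum_(a <- T | agree r g R a == r) ((\max_(j < r) w a j)%N)%:R.

From HB Require Import structures.
From mathcomp Require Import all_boot all_order all_algebra.
From mathcomp Require Import ring lra.
Import Order.TTheory GRing.Theory Num.Theory.
Set Implicit Arguments.
Unset Strict Implicit.
Unset Printing Implicit Defensive.

Local Open Scope ring_scope.

(* If g(a) agrees with Q(a+z) to order i and with R(a+z) to order j, then
   (x - a)^(min i j) divides Q - R; as Q - R is nonzero of degree at most l,
   the minima m(a) add up to at most l.  Pointwise, the two contributions of a
   to Gamma(g,Q) + Gamma(g,R) are at least n((s - m(a)) - (d - l)/n): for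
   m(a) < r, one term is at least that quantity minus w(a,m(a)) and the other
   at least w(a,m(a)), which is at most half of it; for m(a) = r the quantity
   is <= 0 by the choice of s.  It is affine in m(a), so summing over T and
   bounding the sum of the m(a) by l yields n^2 s - n d. *)

Section Agreement.

Variables (F : fieldType) (r : nat) (g : F -> {poly F}).

Lemma agree_spec (R : {poly F}) a :
  ('X^(agree r g R a) %| g a - shiftp R a) && (agree r g R a <= r)%N.
Proof.
have X0_dvd : 'X^0 %| g a - shiftp R a by rewrite expr0 dvd1p.
rewrite /agree (bigop.bigmax_eq_arg (ord0 : 'I_r.+1)) //.
by case: arg_maxnP => // i -> _; rewrite -ltnS ltn_ord.
Qed.

Lemma agree_dvdp (R : {poly F}) a : 'X^(agree r g R a) %| g a - shiftp R a.
Proof. by case/andP: (agree_spec R a). Qed.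

Lemma agree_le (R : {poly F}) a : (agree r g R a <= r)%N.
Proof. by case/andP: (agree_spec R a). Qed.

Lemma dvdp_XsubC_shiftp (p : {poly F}) a m :
  'X^m %| shiftp p a -> ('X - a%:P) ^+ m %| p.
Proof.
case/dvdpP=> q /(congr1 (comp_poly ('X - a%:P))).
rewrite /shiftp comp_polyXaddC_K comp_polyM comp_Xn_poly => ->.
exact: dvdp_mulIr.
Qed.

Lemma dvdp_XsubC_minn_agree (Q R : {poly F}) a :
  ('X - a%:P) ^+ minn (agree r g Q a) (agree r g R a) %| Q - R.
Proof.
apply: dvdp_XsubC_shiftp.
have -> : shiftp (Q - R) a = (g a - shiftp R a) - (g a - shiftp Q a).
  by rewrite /shiftp comp_polyB; ring.
apply: dvdp_sub.
  by apply: dvdp_trans (agree_dvdp R a); rewrite dvdp_exp2l ?geq_minr.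
by apply: dvdp_trans (agree_dvdp Q a); rewrite dvdp_exp2l ?geq_minl.
Qed.

End Agreement.

Lemma sum_root_mult_lt_size (F : fieldType) (T : seq F) (m : F -> nat)
    (p : {poly F}) :
  uniq T -> p != 0 -> (forall a, a \in T -> ('X - a%:P) ^+ m a %| p) ->
  (\sum_(a <- T) m a < size p)%N.
Proof.
elim: T p => [|a T IH] p /=; first by rewrite big_nil size_poly_gt0.
case/andP=> aT uT p_neq0 dvd_p.
have /dvdpP [q def_p] := dvd_p a (mem_head a T).
have q_neq0 : q != 0 by apply: contraNneq p_neq0 => q0; rewrite def_p q0 mul0r.
have sum_lt : (\sum_(b <- T) m b < size q)%N.
  apply: IH => // b bT; have := dvd_p b (mem_behead (s := a :: T) bT).
  rewrite def_p Gauss_dvdpl //.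
  apply/coprimep_expl/coprimep_expr/coprimep_XsubC2.
  by rewrite subr_eq0; apply: contraNneq aT => ->.
rewrite big_cons def_p size_mul ?expf_neq0 ?polyXsubC_eq0 // size_exp_XsubC.
by rewrite addnS /= addnC ltn_add2r.
Qed.

Definition budget (n s d l i : nat) : rat :=
  n%:R * ((s%:R - i%:R) - (d%:R - l%:R) / n%:R).

Definition cost (n s d l r : nat) (w : nat -> nat) (i : nat) : rat :=
  if (i < r)%N then Num.max (budget n s d l i - (w i)%:R) (\max_(j < i) w j)%:R
  else (\max_(j < r) w j)%:R.

Lemma Gamma_sum_cost (F : fieldType) s d l r (T : seq F) w g (R : {poly F}) :
  Gamma s d l r T w g R =
  \sum_(a <- T) cost (size T) s d l r (w a) (agree r g R a).
Proof.
rewrite /Gamma; under eq_bigr do rewrite big_mkcond.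
rewrite exchange_big /= [X in _ + X]big_mkcond -big_split /=.
apply: eq_bigr => a _; rewrite /cost.
case: ltngtP (agree_le r g R a) => // [agree_lt | ->] _; last first.
  by rewrite big1 ?add0r // => i _; rewrite gtn_eqF.
rewrite addr0 -big_mkcond /=.
by rewrite (eq_bigl (pred1 (Ordinal agree_lt))) ?big_pred1_eq.
Qed.

Lemma budgetE (n s d l i : nat) : (0 < n)%N ->
  budget n s d l i = n%:R * s%:R - n%:R * i%:R - (d%:R - l%:R).
Proof. by move=> n_gt0; rewrite /budget; field; rewrite pnatr_eq0 -lt0n. Qed.

Lemma budget_le0 (n d l r : nat) : (0 < n)%N -> (l <= d)%N ->
  budget n (r + (d - l) %/ n) d l r <= 0.
Proof.
move=> n_gt0 le_ld; rewrite budgetE // subr_le0 natrD mulrDr addrAC subrr add0r.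
by rewrite -natrM -natrB // ler_nat mulnC leq_divM.
Qed.

Lemma sum_budget (I : Type) (T : seq I) (n s d l : nat) (m : I -> nat) :
  (0 < n)%N ->
  \sum_(a <- T) budget n s d l (m a) =
  (size T)%:R * (n%:R * s%:R - (d%:R - l%:R)) - n%:R * (\sum_(a <- T) m a)%:R.
Proof.
move=> n_gt0; elim: T => [|a T IH]; first by rewrite !big_nil mul0r mulr0 subr0.
by rewrite !big_cons IH budgetE // natrD /= -addn1 natrD; ring.
Qed.

Section CostPair.

Variables (n s d l r : nat) (w : nat -> nat).
Hypothesis w_le : forall k, (k < r)%N ->
  ((w k)%:R : rat) <= n%:R / 2%:R * ((s%:R - k%:R) - (d%:R - l%:R) / n%:R).
Hypothesis budget_r_le0 : budget n s d l r <= 0.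

Lemma cost_ge0 i : 0 <= cost n s d l r w i.
Proof. by rewrite /cost; case: ifP; rewrite ?le_max ler0n ?orbT. Qed.

Lemma budget_minn_le_cost2 i j : (i <= r)%N -> (j <= r)%N ->
  budget n s d l (minn i j) <= cost n s d l r w i + cost n s d l r w j.
Proof.
wlog le_ij : i j / (i <= j)%N.
  move=> H ir jr; case/orP: (leq_total i j) => le; first exact: H.
  by rewrite minnC addrC; apply: H.
move=> _ jr; rewrite (minn_idPl le_ij).
case: (ltnP i r) => [lt_ir | le_ri]; last first.
  rewrite (@anti_leq i r) ?le_ri ?(leq_trans le_ij) //.
  by apply: le_trans budget_r_le0 _; rewrite addr_ge0 ?cost_ge0.
have w_le_half : (w i)%:R <= budget n s d l i / 2%:R.
  by move: (w_le lt_ir); rewrite /budget mulrAC.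
have cost_i : budget n s d l i - (w i)%:R <= cost n s d l r w i.
  by rewrite /cost lt_ir le_max lexx.
have [<-|ne_ij] := eqVneq i j; first lra.
have cost_j : (w i)%:R <= cost n s d l r w j.
  have lt_ij : (i < j)%N by rewrite ltn_neqAle ne_ij.
  have wi_le_j : (w i <= \max_(k < j) w k)%N.
    exact: (leq_bigmax_cond (F := fun k : 'I_j => w k) (Ordinal lt_ij)).
  have wi_le_r : (w i <= \max_(k < r) w k)%N.
    exact: (leq_bigmax_cond (F := fun k : 'I_r => w k) (Ordinal lt_ir)).
  by rewrite /cost; case: ifP; rewrite ?le_max ler_nat ?wi_le_j ?orbT.
lra.
Qed.

End CostPair.

Theorem lemma6p2 (F : fieldType) (d l r s : nat) (T : seq F)
  (Q R : {poly F}) (g : F -> {poly F}) (w : F -> nat -> nat) :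
  (l <= d)%N ->
  uniq T ->
  (0 < size T)%N ->
  (r + (d - l) %/ size T)%N = s ->
  (size Q <= l.+1)%N -> (size R <= l.+1)%N ->
  (forall a, a \in T -> (size (g a) <= r)%N) ->
  (forall a i, a \in T -> (i < r)%N ->
     ((w a i)%:R : rat) <= (size T)%:R / 2%:R *
        ((s%:R - i%:R) - (d%:R - l%:R) / (size T)%:R)) ->
  Q != R ->
  ((size T)%:R ^+ 2 : rat) * (s%:R - d%:R / (size T)%:R)
    <= Gamma s d l r T w g Q + Gamma s d l r T w g R.
Proof.
move=> le_ld uT n_gt0 def_s szQ szR _ w_le neQR.
set n := size T; set m := fun a => minn (agree r g Q a) (agree r g R a).
have sum_m_le : (\sum_(a <- T) m a <= l)%N.
  rewrite -ltnS; apply: (@leq_trans (size (Q - R))).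
    apply: sum_root_mult_lt_size; rewrite ?subr_eq0 // => a _.
    exact: dvdp_XsubC_minn_agree.
  by apply: leq_trans (size_polyD _ _) _; rewrite size_polyN geq_max szQ szR.
rewrite !Gamma_sum_cost -big_split /=.
have budget_r_le0 : budget n s d l r <= 0 by rewrite -def_s budget_le0.
apply: le_trans (_ : \sum_(a <- T) budget n s d l (m a) <= _); last first.
  rewrite !big_seq; apply: ler_sum => a aT.
  exact: budget_minn_le_cost2 (fun k => w_le a k aT) budget_r_le0 _ _
    (agree_le r g Q a) (agree_le r g R a).
rewrite sum_budget // -/n.
have n_pos : (0 : rat) < n%:R by rewrite ltr0n.
have : ((\sum_(a <- T) m a)%:R : rat) <= l%:R by rewrite ler_nat.
have -> : (n%:R ^+ 2 : rat) * (s%:R - d%:R / n%:R) = n%:R * n%:R * s%:R - n%:R * d%:R.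
  by field; rewrite pnatr_eq0 -lt0n.
nra.
Qed.
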